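(* Let $\langle A;\cdot\rangle$ be a semigroup satisfying condition $( * )$. Then $\langle A;\cdot\rangle$ is an Abelian algebra if and only if $\langle A;\cdot\rangle$ is an inflation of a subsemigroup which is a rectangular band of commutative groups, and the product of any two idempotents of $A$ is an idempotent.
   Context: $A\cdot A=\{xy\mid x,y\in A\}$; an idempotent is $e$ with $ee=e$. Condition $( * )$: either ($bcA=bA$ and $Abc=Ac$ for all $b,c\in A$), or the set $A\cdot A$ is finite. A semigroup $\langle T;\cdot\rangle$ is a rectangular band of semigroups $T_{i\lambda}$ if $\{T_{i\lambda}\mid i\in I,\lambda\in\Lambda\}$ is a partition of $T$ into subsemigroups with $T_{i\lambda}\cdot T_{j\mu}\subseteq T_{i\mu}$ for all $i,j\in I$, $\lambda,\mu\in\Lambda$; it is a rectangular band of commutative groups if each $\langle T_{i\lambda};\cdot\rangle$ is a commutative group. A semigroup $\langle A;\cdot\rangle$ is an inflation of a subsemigroup $\langle B;\cdot\rangle$ if there is a partition $\{X_b\mid b\in B\}$ of $A$ with $b\in X_b$ and $x\cdot y=a\cdot b$ for all $a,b\in B$, $x\in X_a$, $y\in X_b$. A polynomial operation of an algebra is an operation obtained from a term by substituting elements of the algebra for some of its variables. An algebra is called Abelian if for every polynomial operation $t(x,y_1,\ldots,y_n)$ and all elements $u,v,c_1,\ldots,c_n,d_1,\ldots,d_n$ of the algebra, $t(u,c_1,\ldots,c_n)=t(u,d_1,\ldots,d_n)$ implies $t(v,c_1,\ldots,c_n)=t(v,d_1,\ldots,d_n)$. *)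

From Stdlib Require Import List.

Section SG.
Variable A : Type.
Variable mul : A -> A -> A.

Definition cond_star : Prop :=
  (forall b c : A,
     (forall x, (exists a, x = mul (mul b c) a) <-> (exists a, x = mul b a)) /\
     (forall x, (exists a, x = mul (mul a b) c) <-> (exists a, x = mul a c)))
  \/ (exists l : list A, forall x y : A, In (mul x y) l).

(* Terms of the semigroup signature with variables (indexed by nat) and
   constants from A; their evaluations are exactly the polynomial operations. *)
Inductive sterm : Type :=
  | TVar : nat -> sterm
  | TConst : A -> sterm
  | TMul : sterm -> sterm -> sterm.

Fixpoint seval (env : nat -> A) (t : sterm) : A :=
  match t with
  | TVar i => env i
  | TConst a => a
  | TMul t1 t2 => mul (seval env t1) (seval env t2)
  end.

Definition env_cons (u : A) (c : nat -> A) : nat -> A :=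
  fun i => match i with 0 => u | S _ => c i end.

Definition abelian_algebra : Prop :=
  forall (t : sterm) (u v : A) (c d : nat -> A),
    seval (env_cons u c) t = seval (env_cons u d) t ->
    seval (env_cons v c) t = seval (env_cons v d) t.

Definition subsemigroup (B : A -> Prop) : Prop :=
  forall x y, B x -> B y -> B (mul x y).

(* A is an inflation of the subsemigroup B: a partition {X_b | b in B} of A
   (X b x means x \in X_b) with b \in X_b and x y = a b for x in X_a, y in X_b. *)
Definition inflation_of (B : A -> Prop) : Prop :=
  exists X : A -> A -> Prop,
    (forall b x, X b x -> B b) /\
    (forall x, exists b, B b /\ X b x /\ (forall b', B b' -> X b' x -> b' = b)) /\
    (forall b, B b -> X b b) /\
    (forall a b x y, B a -> B b -> X a x -> X b y -> mul x y = mul a b).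

Definition rect_band_comm_groups (T : A -> Prop) : Prop :=
  exists (I L : Type) (P : I -> L -> A -> Prop),
    (forall i l x, P i l x -> T x) /\
    (forall x, T x -> exists i l, P i l x /\
        (forall i' l', P i' l' x -> i' = i /\ l' = l)) /\
    (forall i l, exists x, P i l x) /\
    (forall i l x y, P i l x -> P i l y -> P i l (mul x y)) /\
    (forall i j l m x y, P i l x -> P j m y -> P i m (mul x y)) /\
    (forall i l,
       (forall x y, P i l x -> P i l y -> mul x y = mul y x) /\
       exists e, P i l e /\
         (forall x, P i l x -> mul e x = x /\ mul x e = x) /\
         (forall x, P i l x -> exists y, P i l y /\ mul x y = e /\ mul y x = e)).

Definition idempotent (e : A) : Prop := mul e e = e.

End SG.
Arguments cond_star {A}.
Arguments abelian_algebra {A}.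
Arguments subsemigroup {A}.
Arguments inflation_of {A}.
Arguments rect_band_comm_groups {A}.
Arguments idempotent {A}.

Arguments TVar {A}.
Arguments TConst {A}.
Arguments TMul {A}.

From Stdlib Require Import List Arith Lia Classical ProofIrrelevance.

(* In an Abelian semigroup u c = u d implies v c = v d, and dually, so idempotents
   are middle units (x e y = x y). Under ( * ) every product s = y z then has an
   idempotent two-sided unit, and every local monoid eAe is a group, commutative
   again by the Abelian property. So A.A is a rectangular band of commutative groups
   H_il, and every x acts on A exactly like the product f x f (f a unit of x x),
   which makes A an inflation of A.A.
   Conversely, sandwiching by the identity e of a block H_il is a homomorphism of A
   into the commutative group H_il, so e t(v,c) e is determined by t(u,c); and the
   block of t(v,c) only depends on the leftmost and rightmost letters of t, which
   cannot separate c from d once t(u,c) = t(u,d). *)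

Lemma finite_range_repeats {A : Type} (f : nat -> A) (l : list A) :
  (forall k, In (f k) l) -> exists i j, i < j /\ f i = f j.
Proof.
  intro Hf. apply NNPP. intro Hinj.
  assert (Hnd : NoDup (map f (seq 0 (S (length l))))).
  { apply NoDup_map_NoDup_ForallPairs; [|apply seq_NoDup].
    intros x y _ _ Exy.
    destruct (Nat.lt_trichotomy x y) as [Hxy|[Hxy|Hxy]]; [|exact Hxy|];
      exfalso; apply Hinj; eauto. }
  apply NoDup_incl_length with (l' := l) in Hnd.
  - rewrite length_map, length_seq in Hnd. lia.
  - intros x Hx. apply in_map_iff in Hx. destruct Hx as [k [<- _]]. apply Hf.
Qed.

Section Semigroup.
Variable A : Type.
Variable mul : A -> A -> A.
Hypothesis assoc : forall x y z : A, mul x (mul y z) = mul (mul x y) z.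
Local Infix "**" := mul (at level 40, left associativity).

Definition two_sided_unit (e x : A) : Prop := e ** x = x /\ x ** e = x.

Definition products_have_local_units : Prop :=
  forall y z, exists f, idempotent mul f /\ two_sided_unit f (y ** z).

Definition local_monoids_are_groups : Prop :=
  forall f g, idempotent mul f -> two_sided_unit f g ->
  exists h, two_sided_unit f h /\ g ** h = f /\ h ** g = f.

Definition idempotents_are_middle_units : Prop :=
  forall e x y, idempotent mul e -> x ** e ** y = x ** y.

Lemma idempotent_mul_of_middle_units :
  idempotents_are_middle_units ->
  forall e f, idempotent mul e -> idempotent mul f -> idempotent mul (e ** f).
Proof.
  intros Hmid e f He Hf. unfold idempotent in *.
  rewrite assoc, (Hmid e (e ** f) f He), <- assoc, Hf. reflexivity.
Qed.

Lemma group_inverse_of_factorizations f g a a' :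
  idempotent mul f -> two_sided_unit f g -> f = g ** a -> f = a' ** g ->
  exists h, two_sided_unit f h /\ g ** h = f /\ h ** g = f.
Proof.
  unfold idempotent. intros Hf [Hfg Hgf] Ha Ha'.
  assert (Hgh : g ** (f ** a ** f) = f).
  { rewrite !assoc, Hgf, <- Ha. exact Hf. }
  assert (Hh'g : f ** a' ** f ** g = f).
  { rewrite <- assoc, Hfg, <- assoc, <- Ha'. exact Hf. }
  assert (Eh : f ** a ** f = f ** a' ** f).
  { transitivity (f ** a' ** f ** g ** (f ** a ** f)).
    - rewrite Hh'g, !assoc, Hf. reflexivity.
    - rewrite <- (assoc _ g), Hgh, <- (assoc (f ** a')), Hf. reflexivity. }
  exists (f ** a ** f). repeat split.
  - rewrite !assoc, Hf. reflexivity.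
  - rewrite <- assoc, Hf. reflexivity.
  - exact Hgh.
  - rewrite Eh. exact Hh'g.
Qed.

(* [spow s n] is s^(n+1): a semigroup has no s^0. *)
Fixpoint spow (s : A) (n : nat) : A :=
  match n with 0 => s | S n => spow s n ** s end.

Lemma spow_add s m n : spow s m ** spow s n = spow s (S (m + n)).
Proof.
  induction n as [|n IH]; simpl.
  - rewrite Nat.add_0_r. reflexivity.
  - rewrite assoc, IH, Nat.add_succ_r. reflexivity.
Qed.

Lemma spow_succ_l s n : spow s (S n) = s ** spow s n.
Proof. exact (eq_sym (spow_add s 0 n)). Qed.

Lemma idempotent_spow_double s m :
  idempotent mul (spow s m) -> spow s m = spow s (S (m + m)).
Proof. unfold idempotent. intro H. rewrite <- spow_add. symmetry. exact H. Qed.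

Lemma two_sided_unit_spow f g n :
  two_sided_unit f g -> two_sided_unit f (spow g n).
Proof.
  intros [H1 H2]. induction n as [|n [IH1 IH2]]; simpl; [split; assumption|].
  split; [rewrite assoc, IH1 | rewrite <- assoc, H2]; reflexivity.
Qed.

Lemma spow_shift s i j : spow s i = spow s j -> forall k, spow s (i + k) = spow s (j + k).
Proof.
  intros E k. induction k as [|k IH].
  - rewrite !Nat.add_0_r. exact E.
  - rewrite !Nat.add_succ_r. simpl. rewrite IH. reflexivity.
Qed.

Lemma idempotent_spow_of_repeat s i j :
  i < j -> spow s i = spow s j -> exists m, idempotent mul (spow s m).
Proof.
  intros Hij E. set (p := j - i).
  assert (Hperiod : forall q k, spow s (i + k) = spow s (i + k + q * p)).
  { induction q as [|q IH]; intro k.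
    - rewrite Nat.add_0_r. reflexivity.
    - rewrite IH, Nat.mul_succ_l.
      replace (i + k + q * p) with (i + (k + q * p)) by lia.
      rewrite (spow_shift s i j E). f_equal. unfold p. lia. }
  (* m + 1 is a multiple of the period p and m lies beyond the preperiod i *)
  exists (S i * p - 1). unfold idempotent. rewrite spow_add.
  assert (Hp : S i <= S i * p) by (unfold p; nia).
  pose proof (Hperiod (S i) (S i * p - 1 - i)) as HP.
  replace (i + (S i * p - 1 - i)) with (S i * p - 1) in HP by lia.
  rewrite HP. f_equal. lia.
Qed.

Lemma idempotent_spow_of_finite_products (l : list A) :
  (forall x y, In (x ** y) l) -> forall s, exists m, idempotent mul (spow s m).
Proof.
  intros Hl s.
  destruct (finite_range_repeats (fun k => spow s (S k)) l) as [i [j [Hij E]]].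
  - intro k. apply Hl.
  - apply (idempotent_spow_of_repeat s (S i) (S j)); [lia | exact E].
Qed.

Lemma local_groups_of_principal_ideals :
  (forall b c : A,
     (forall x, (exists a, x = b ** c ** a) <-> (exists a, x = b ** a)) /\
     (forall x, (exists a, x = a ** b ** c) <-> (exists a, x = a ** c))) ->
  local_monoids_are_groups.
Proof.
  intros Hstar f g Hf [Hfg Hgf].
  destruct (proj2 (proj1 (Hstar f g) f) (ex_intro _ f (eq_sym Hf))) as [a Ha].
  destruct (proj2 (proj2 (Hstar g f) f) (ex_intro _ f (eq_sym Hf))) as [a' Ha'].
  rewrite Hfg in Ha. rewrite <- assoc, Hgf in Ha'.
  exact (group_inverse_of_factorizations f g a a' Hf (conj Hfg Hgf) Ha Ha').
Qed.

Lemma unit_absorbs_group_unit e f x :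
  local_monoids_are_groups -> idempotent mul f ->
  two_sided_unit f x -> two_sided_unit e x -> e ** f = f /\ f ** e = f.
Proof.
  intros Hgrp Hf Hfx [Hex Hxe].
  destruct (Hgrp f x Hf Hfx) as [h [_ [Hxh Hhx]]].
  split.
  - rewrite <- Hxh, assoc, Hex. reflexivity.
  - rewrite <- Hhx, <- assoc, Hxe. reflexivity.
Qed.

Lemma two_sided_unit_mul_rect i l j m x y :
  idempotents_are_middle_units -> idempotent mul i -> idempotent mul m ->
  two_sided_unit (i ** l) x -> two_sided_unit (j ** m) y ->
  two_sided_unit (i ** m) (x ** y).
Proof.
  intros Hmid Hi Hm [Hx1 Hx2] [Hy1 Hy2].
  assert (Himx : i ** m ** x = x).
  { rewrite <- Hx1 at 1. rewrite !assoc, (Hmid m i i Hm), Hi. exact Hx1. }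
  assert (Hyim : y ** (i ** m) = y).
  { rewrite <- Hy2 at 1.
    rewrite !assoc, (Hmid i (y ** j ** m) m Hi), <- (assoc _ m m), Hm, <- assoc. exact Hy2. }
  split; [rewrite assoc, Himx | rewrite <- assoc, Hyim]; reflexivity.
Qed.

Lemma unit_factors_through e0 f x i l :
  idempotents_are_middle_units -> local_monoids_are_groups ->
  idempotent mul f -> idempotent mul i -> idempotent mul l ->
  i ** e0 = i -> e0 ** l = l ->
  two_sided_unit f x -> two_sided_unit (i ** l) x -> i = f ** e0 /\ l = e0 ** f.
Proof.
  intros Hmid Hgrp Hf Hi Hl Ei El Hfx Hx.
  destruct (unit_absorbs_group_unit (i ** l) f x Hgrp Hf Hfx Hx) as [Hilf Hfil].
  split.
  - rewrite <- Hilf, (Hmid f _ e0 Hf), (Hmid l i e0 Hl). symmetry. exact Ei.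
  - rewrite <- Hfil, !assoc, (Hmid f e0 i Hf), (Hmid i e0 l Hi). symmetry. exact El.
Qed.

Lemma rect_band_comm_groups_of_empty (T : A -> Prop) :
  (A -> False) -> rect_band_comm_groups mul T.
Proof.
  intro Hempty. exists False, False, (fun _ _ _ => False).
  repeat split; intros; solve [contradiction | exfalso; eauto].
Qed.

Section Abelian.
Hypothesis abelian : abelian_algebra mul.

Lemma abelian_left_transfer u v c d : u ** c = u ** d -> v ** c = v ** d.
Proof. exact (abelian (TMul (TVar 0) (TVar 1)) u v (fun _ => c) (fun _ => d)). Qed.

Lemma abelian_right_transfer u v c d : c ** u = d ** u -> c ** v = d ** v.
Proof. exact (abelian (TMul (TVar 1) (TVar 0)) u v (fun _ => c) (fun _ => d)). Qed.

Lemma abelian_middle_units : idempotents_are_middle_units.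
Proof.
  intros e x y He. rewrite <- assoc. apply (abelian_left_transfer e).
  rewrite assoc, He. reflexivity.
Qed.

Lemma left_unit_of_factor f y u z :
  idempotent mul f -> f = y ** u -> f ** (y ** z) = y ** z.
Proof.
  intros Hf Hyu. rewrite assoc. apply (abelian_right_transfer u).
  rewrite <- assoc, <- Hyu. exact Hf.
Qed.

Lemma right_unit_of_factor f y u z :
  idempotent mul f -> f = u ** z -> y ** z ** f = y ** z.
Proof.
  intros Hf Huz. rewrite <- assoc. apply (abelian_left_transfer u).
  rewrite assoc, <- Huz. exact Hf.
Qed.

Lemma idempotent_square_of_right_stabilizer s a :
  s = s ** a -> idempotent mul (a ** a) /\ s ** (a ** a) = s.
Proof.
  intro Hs.
  assert (Ha : a ** (a ** a) = a ** a).
  { symmetry. apply (abelian_left_transfer s). rewrite assoc, <- Hs. exact Hs. }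
  split.
  - unfold idempotent. rewrite <- assoc, Ha. exact Ha.
  - rewrite assoc, <- !Hs. reflexivity.
Qed.

Lemma idempotent_square_of_left_stabilizer s a :
  s = a ** s -> idempotent mul (a ** a) /\ a ** a ** s = s.
Proof.
  intro Hs.
  assert (Ha : a ** a ** a = a ** a).
  { symmetry. apply (abelian_right_transfer s). rewrite <- assoc, <- Hs. exact Hs. }
  split.
  - unfold idempotent. rewrite assoc, Ha. exact Ha.
  - rewrite <- assoc, <- !Hs. reflexivity.
Qed.

Lemma local_unit_of_stabilizers s a a' :
  s = s ** a -> s = a' ** s -> exists f, idempotent mul f /\ two_sided_unit f s.
Proof.
  intros Hr Hl.
  destruct (idempotent_square_of_right_stabilizer s a Hr) as [Ha Hsa].
  destruct (idempotent_square_of_left_stabilizer s a' Hl) as [Ha' Has].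
  exists (a' ** a' ** (a ** a)). split; [|split].
  - exact (idempotent_mul_of_middle_units abelian_middle_units _ _ Ha' Ha).
  - rewrite abelian_middle_units by exact Ha. exact Has.
  - rewrite assoc, abelian_middle_units by exact Ha'. exact Hsa.
Qed.

Lemma local_units_of_principal_ideals :
  (forall b c : A,
     (forall x, (exists a, x = b ** c ** a) <-> (exists a, x = b ** a)) /\
     (forall x, (exists a, x = a ** b ** c) <-> (exists a, x = a ** c))) ->
  products_have_local_units.
Proof.
  intros Hstar y z.
  destruct (proj2 (proj1 (Hstar y z) (y ** z)) (ex_intro _ z eq_refl)) as [a Ha].
  destruct (proj2 (proj2 (Hstar y z) (y ** z)) (ex_intro _ y eq_refl)) as [a' Ha'].
  rewrite <- assoc in Ha'.
  exact (local_unit_of_stabilizers (y ** z) a a' Ha Ha').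
Qed.

Lemma local_units_of_finite_products (l : list A) :
  (forall x y, In (x ** y) l) -> products_have_local_units.
Proof.
  intros Hl y z.
  destruct (idempotent_spow_of_finite_products l Hl (y ** z)) as [m Hm].
  pose proof (idempotent_spow_double _ _ Hm) as E.
  exists (spow (y ** z) m). split; [exact Hm | split].
  - apply (left_unit_of_factor _ y (z ** spow (y ** z) (m + m))); [exact Hm|].
    rewrite E, spow_succ_l, assoc. reflexivity.
  - apply (right_unit_of_factor _ y (spow (y ** z) (m + m) ** y)); [exact Hm|].
    rewrite E. simpl. rewrite assoc. reflexivity.
Qed.

Lemma local_groups_of_finite_products (l : list A) :
  (forall x y, In (x ** y) l) -> local_monoids_are_groups.
Proof.
  intros Hl f g Hf Hg.
  destruct (idempotent_spow_of_finite_products l Hl g) as [m Hm].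
  assert (Ef : spow g m = f).
  { destruct (two_sided_unit_spow f g m Hg) as [H1 H2].
    transitivity (f ** spow g m ** f); [rewrite H1, H2; reflexivity|].
    rewrite abelian_middle_units by exact Hm. exact Hf. }
  pose proof (idempotent_spow_double _ _ Hm) as E. rewrite Ef in E.
  apply (group_inverse_of_factorizations f g (spow g (m + m)) (spow g (m + m)) Hf Hg).
  - rewrite E, spow_succ_l. reflexivity.
  - exact E.
Qed.

Lemma local_groups_commute f g h :
  local_monoids_are_groups -> idempotent mul f ->
  two_sided_unit f g -> two_sided_unit f h -> g ** h = h ** g.
Proof.
  intros Hgrp Hf Hg [Hfh Hhf].
  destruct (Hgrp f g Hf Hg) as [g' [_ [Hgg' Hg'g]]].
  (* the polynomial x |-> y1 x y2 agrees at x = f for (y1, y2) = (g, g') and (f, f) *)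
  assert (Hconj : g ** h ** g' = h).
  { pose proof (abelian (TMul (TMul (TVar 1) (TVar 0)) (TVar 2)) f h
      (fun i => match i with 1 => g | _ => g' end) (fun _ => f)) as Ht.
    simpl in Ht. rewrite Ht, Hfh, Hhf; [reflexivity|].
    rewrite (proj2 Hg), Hgg'. unfold idempotent in Hf. rewrite !Hf. reflexivity. }
  rewrite <- Hconj at 2. rewrite <- !assoc, Hg'g, Hhf. reflexivity.
Qed.

Definition is_product (x : A) : Prop := exists y z, x = y ** z.

Lemma is_product_mul x y : is_product (x ** y).
Proof. exists x, y. reflexivity. Qed.

Lemma product_determined_by_action b b' :
  products_have_local_units -> is_product b -> is_product b' ->
  (forall y, b ** y = b' ** y) -> (forall y, y ** b = y ** b') -> b = b'.
Proof.
  intros Hunits [y [z ->]] [y' [z' ->]] Hl Hr.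
  destruct (Hunits y z) as [f [_ [Hf _]]].
  destruct (Hunits y' z') as [f' [_ [_ Hf']]].
  rewrite <- Hf, Hr, <- Hf' at 1. rewrite assoc, <- Hr, Hf, Hl. exact Hf'.
Qed.

Lemma inflation_of_products :
  products_have_local_units -> inflation_of mul is_product.
Proof.
  intro Hunits.
  exists (fun b x => is_product b /\
            (forall y, x ** y = b ** y) /\ (forall y, y ** x = y ** b)).
  split; [intros b x [Hb _]; exact Hb|]. split; [|split].
  - intro x. destruct (Hunits x x) as [f [Hf [Hfx Hxf]]].
    assert (Hl : forall y, x ** y = f ** x ** f ** y).
    { intro y. rewrite abelian_middle_units by exact Hf.
      apply (abelian_right_transfer x). rewrite <- assoc, Hfx. reflexivity. }
    assert (Hr : forall y, y ** x = y ** (f ** x ** f)).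
    { intro y. rewrite !assoc, (abelian_middle_units f y x Hf), <- assoc.
      apply (abelian_left_transfer x). rewrite assoc, Hxf. reflexivity. }
    exists (f ** x ** f). split; [apply is_product_mul|]. split.
    + split; [apply is_product_mul | split; assumption].
    + intros b' Hb' [_ [Hl' Hr']]. apply product_determined_by_action; auto.
      * apply is_product_mul.
      * intro y. rewrite <- Hl', Hl. reflexivity.
      * intro y. rewrite <- Hr', Hr. reflexivity.
  - intros b Hb. repeat split; [exact Hb].
  - intros a b x y _ _ [_ [Hxa _]] [_ [_ Hyb]]. rewrite Hxa, Hyb. reflexivity.
Qed.

Lemma rect_band_of_products :
  products_have_local_units -> local_monoids_are_groups ->
  rect_band_comm_groups mul is_product.
Proof.
  intros Hunits Hgrp.
  pose proof abelian_middle_units as Hmid.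
  pose proof (idempotent_mul_of_middle_units Hmid) as Hidem.
  destruct (classic (exists e0, idempotent mul e0)) as [[e0 He0] | Hnone].
  2:{ apply rect_band_comm_groups_of_empty. intro a.
      destruct (Hunits a a) as [f [Hf _]]. eauto. }
  (* e0 selects one representative idempotent per row (i e0 = i) and per column (e0 l = l) *)
  exists {i | idempotent mul i /\ i ** e0 = i}, {l | idempotent mul l /\ e0 ** l = l},
    (fun i l x => two_sided_unit (proj1_sig i ** proj1_sig l) x).
  split; [|split; [|split; [|split; [|split]]]].
  - intros i l x [Hx _]. rewrite <- Hx. apply is_product_mul.
  - intros x [y [z Hx]]. destruct (Hunits y z) as [f [Hf Hfx]]. rewrite <- Hx in Hfx.
    assert (Hi : idempotent mul (f ** e0) /\ f ** e0 ** e0 = f ** e0).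
    { split; [exact (Hidem f e0 Hf He0) | rewrite <- assoc, He0; reflexivity]. }
    assert (Hl : idempotent mul (e0 ** f) /\ e0 ** (e0 ** f) = e0 ** f).
    { split; [exact (Hidem e0 f He0 Hf) | rewrite assoc, He0; reflexivity]. }
    assert (Hf0 : f ** e0 ** (e0 ** f) = f).
    { rewrite assoc, (Hmid e0 (f ** e0) f He0), (Hmid e0 f f He0). exact Hf. }
    exists (exist _ (f ** e0) Hi), (exist _ (e0 ** f) Hl). simpl. rewrite Hf0. split; [exact Hfx|].
    intros [i' [Hi' Ei']] [l' [Hl' El']] Hx'. simpl in Hx'.
    destruct (unit_factors_through e0 f x i' l' Hmid Hgrp Hf Hi' Hl' Ei' El' Hfx Hx')
      as [-> ->].
    split; apply subset_eq_compat; reflexivity.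
  - intros [i [Hi ?]] [l [Hl ?]]. simpl. exists (i ** l).
    pose proof (Hidem i l Hi Hl) as Hil. split; exact Hil.
  - intros i l x y [Hx1 _] [_ Hy2].
    split; [rewrite assoc, Hx1 | rewrite <- assoc, Hy2]; reflexivity.
  - intros [i [Hi ?]] [j ?] [l ?] [m [Hm ?]] x y Hx Hy. simpl in *.
    exact (two_sided_unit_mul_rect i l j m x y Hmid Hi Hm Hx Hy).
  - intros [i [Hi ?]] [l [Hl ?]]. simpl.
    pose proof (Hidem i l Hi Hl) as Hil. split.
    + intros x y Hx Hy. exact (local_groups_commute _ x y Hgrp Hil Hx Hy).
    + exists (i ** l). split; [split; exact Hil|]. split; [intros x Hx; exact Hx|].
      intros x Hx. destruct (Hgrp _ x Hil Hx) as [h [Hh Hxh]]. eauto.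
Qed.

End Abelian.

Fixpoint leftmost (t : sterm A) : sterm A :=
  match t with TMul t1 _ => leftmost t1 | _ => t end.

Fixpoint rightmost (t : sterm A) : sterm A :=
  match t with TMul _ t2 => rightmost t2 | _ => t end.

Lemma leftmost_cases t :
  leftmost t = TVar 0 \/
  forall w w' c, seval A mul (env_cons A w c) (leftmost t) =
                 seval A mul (env_cons A w' c) (leftmost t).
Proof.
  induction t as [[|n] | a | t1 IH1 t2 _]; simpl; auto.
Qed.

Lemma rightmost_cases t :
  rightmost t = TVar 0 \/
  forall w w' c, seval A mul (env_cons A w c) (rightmost t) =
                 seval A mul (env_cons A w' c) (rightmost t).
Proof.
  induction t as [[|n] | a | t1 _ t2 IH2]; simpl; auto.
Qed.

Section InflationOfRectangularBand.
Variable T : A -> Prop.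
Hypothesis T_mul : subsemigroup mul T.
Variable X : A -> A -> Prop.
Hypothesis X_cover : forall x, exists b, T b /\ X b x.
Hypothesis X_refl : forall b, T b -> X b b.
Hypothesis X_mul : forall a b x y, T a -> T b -> X a x -> X b y -> x ** y = a ** b.
Variables (I L : Type) (P : I -> L -> A -> Prop).
Hypothesis P_cover : forall x, T x -> exists i l, P i l x.
Hypothesis P_unique : forall i l i' l' x, P i l x -> P i' l' x -> i = i' /\ l = l'.
Hypothesis P_rect : forall i j l m x y, P i l x -> P j m y -> P i m (x ** y).
Hypothesis P_comm : forall i l x y, P i l x -> P i l y -> x ** y = y ** x.
Hypothesis P_group : forall i l, exists e, P i l e /\
  (forall x, P i l x -> two_sided_unit e x) /\
  (forall x, P i l x -> exists y, P i l y /\ x ** y = e /\ y ** x = e).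
Hypothesis idempotent_closed :
  forall e f, idempotent mul e -> idempotent mul f -> idempotent mul (e ** f).

Lemma T_product x y : T (x ** y).
Proof.
  destruct (X_cover x) as [a [Ha Xa]]. destruct (X_cover y) as [b [Hb Xb]].
  rewrite (X_mul a b x y Ha Hb Xa Xb). apply T_mul; assumption.
Qed.

Lemma T_idempotent e : idempotent mul e -> T e.
Proof. intro He. rewrite <- He. apply T_product. Qed.

Lemma block_idempotent_unique i l e f :
  P i l e -> P i l f -> idempotent mul e -> idempotent mul f -> e = f.
Proof.
  destruct (P_group i l) as [u [_ [Hunit Hinv]]].
  assert (Hu : forall g, P i l g -> idempotent mul g -> g = u).
  { intros g Hg Hidg. destruct (Hinv g Hg) as [h [_ [_ Hhg]]].
    rewrite <- (proj1 (Hunit g Hg)), <- Hhg, <- assoc, Hidg. reflexivity. }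
  intros He Hf Hide Hidf. rewrite (Hu e He Hide), (Hu f Hf Hidf). reflexivity.
Qed.

Lemma inflation_middle_units : idempotents_are_middle_units.
Proof.
  assert (HT : forall a b f, T a -> T b -> idempotent mul f -> a ** f ** b = a ** b).
  { intros a b f Ha Hb Hf.
    destruct (P_cover a Ha) as [i [l Pa]]. destruct (P_cover b Hb) as [k [n Pb]].
    destruct (P_cover f (T_idempotent f Hf)) as [j [m Pf]].
    destruct (P_group i l) as [e1 [Pe1 [U1 _]]].
    destruct (P_group k n) as [e2 [Pe2 [U2 _]]].
    assert (He1 : idempotent mul e1) by exact (proj1 (U1 e1 Pe1)).
    assert (He2 : idempotent mul e2) by exact (proj1 (U2 e2 Pe2)).
    (* e1 f e2 and e1 e2 are idempotents of the same block (i, n) *)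
    assert (E : e1 ** f ** e2 = e1 ** e2).
    { apply (block_idempotent_unique i n).
      - exact (P_rect _ _ _ _ _ _ (P_rect _ _ _ _ _ _ Pe1 Pf) Pe2).
      - exact (P_rect _ _ _ _ _ _ Pe1 Pe2).
      - repeat apply idempotent_closed; assumption.
      - apply idempotent_closed; assumption. }
    rewrite <- (proj2 (U1 a Pa)), <- (proj1 (U2 b Pb)).
    rewrite !assoc, <- (assoc (a ** e1) f e2), <- (assoc a e1 (f ** e2)),
      (assoc e1 f e2), E, assoc. reflexivity. }
  intros f x y Hf. pose proof (T_idempotent f Hf) as Tf.
  destruct (X_cover x) as [a [Ha Xa]]. destruct (X_cover y) as [b [Hb Xb]].
  assert (Taf : T (a ** f)) by (apply T_mul; assumption).
  rewrite (X_mul a f x f Ha Tf Xa (X_refl f Tf)).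
  rewrite (X_mul (a ** f) b (a ** f) y Taf Hb (X_refl _ Taf) Xb).
  rewrite (X_mul a b x y Ha Hb Xa Xb). exact (HT a b f Ha Hb Hf).
Qed.

Lemma sandwich_in_block i l e x : P i l e -> P i l (e ** x ** e).
Proof.
  intro Pe.
  destruct (P_cover _ (T_product e x)) as [i1 [m1 P1]].
  destruct (P_cover _ (T_product x e)) as [j [m P2]].
  pose proof (P_rect _ _ _ _ _ _ P1 Pe) as Q1.
  pose proof (P_rect _ _ _ _ _ _ Pe P2) as Q2. rewrite assoc in Q2.
  destruct (P_unique _ _ _ _ _ Q1 Q2) as [-> _]. exact Q1.
Qed.

Lemma sandwich_mul e x y :
  idempotent mul e -> e ** (x ** y) ** e = (e ** x ** e) ** (e ** y ** e).
Proof.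
  intro He. rewrite !assoc, <- (assoc (e ** x) e e), He.
  rewrite (inflation_middle_units e (e ** x) y He). reflexivity.
Qed.

Lemma block_interchange i l p q r s :
  P i l p -> P i l q -> P i l r -> P i l s -> (p ** q) ** (r ** s) = (p ** r) ** (q ** s).
Proof.
  intros Pp Pq Pr Ps.
  rewrite !assoc, <- (assoc p q r), (P_comm i l q r Pq Pr), assoc. reflexivity.
Qed.

Lemma block_cancel_left i l a p q : P i l a -> P i l p -> P i l q -> a ** p = a ** q -> p = q.
Proof.
  intros Pa Pp Pq E. destruct (P_group i l) as [e [_ [Hunit Hinv]]].
  destruct (Hinv a Pa) as [h [_ [_ Hha]]].
  rewrite <- (proj1 (Hunit p Pp)), <- (proj1 (Hunit q Pq)), <- Hha, <- !assoc, E.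
  reflexivity.
Qed.

Local Notation ev w c t := (seval A mul (env_cons A w c) t).

(* x |-> e x e is a homomorphism into the commutative group H_il, in which every
   polynomial splits as (part depending on x) * (part depending on the constants) *)
Lemma sandwich_term_interchange i l e t u v c d :
  P i l e -> idempotent mul e ->
  (e ** ev u c t ** e) ** (e ** ev v d t ** e) =
  (e ** ev u d t ** e) ** (e ** ev v c t ** e).
Proof.
  intros Pe He. revert u v c d.
  induction t as [[|n] | a | t1 IH1 t2 IH2]; intros u v c d; simpl.
  - reflexivity.
  - apply (P_comm i l); apply sandwich_in_block; exact Pe.
  - reflexivity.
  - rewrite !(sandwich_mul e _ _ He).
    rewrite (block_interchange i l); try apply sandwich_in_block; try exact Pe.
    rewrite IH1, IH2.
    rewrite (block_interchange i l); try apply sandwich_in_block; try exact Pe.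
    reflexivity.
Qed.

Definition row_of (i : I) (x : A) : Prop := forall y, exists m, P i m (x ** y).
Definition col_of (l : L) (x : A) : Prop := forall y, exists j, P j l (y ** x).

Lemma row_exists x : exists i, row_of i x.
Proof.
  destruct (X_cover x) as [a [Ha Xa]]. destruct (P_cover a Ha) as [i [l Pa]].
  exists i. intro y.
  destruct (X_cover y) as [b [Hb Xb]]. destruct (P_cover b Hb) as [j [m Pb]].
  exists m. rewrite (X_mul a b x y Ha Hb Xa Xb). exact (P_rect _ _ _ _ _ _ Pa Pb).
Qed.

Lemma col_exists x : exists l, col_of l x.
Proof.
  destruct (X_cover x) as [b [Hb Xb]]. destruct (P_cover b Hb) as [j [l Pb]].
  exists l. intro y.
  destruct (X_cover y) as [a [Ha Xa]]. destruct (P_cover a Ha) as [i [m Pa]].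
  exists i. rewrite (X_mul a b y x Ha Hb Xa Xb). exact (P_rect _ _ _ _ _ _ Pa Pb).
Qed.

Lemma row_unique i i' x : row_of i x -> row_of i' x -> i = i'.
Proof.
  intros Hi Hi'. destruct (Hi x) as [m Pm]. destruct (Hi' x) as [m' Pm'].
  exact (proj1 (P_unique _ _ _ _ _ Pm Pm')).
Qed.

Lemma col_unique l l' x : col_of l x -> col_of l' x -> l = l'.
Proof.
  intros Hl Hl'. destruct (Hl x) as [j Pj]. destruct (Hl' x) as [j' Pj'].
  exact (proj2 (P_unique _ _ _ _ _ Pj Pj')).
Qed.

Lemma row_of_leftmost env t i :
  row_of i (seval A mul env (leftmost t)) -> row_of i (seval A mul env t).
Proof.
  induction t as [n | a | t1 IH1 t2 _]; simpl; auto.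
  intros Hi y. rewrite <- assoc. apply IH1, Hi.
Qed.

Lemma col_of_rightmost env t l :
  col_of l (seval A mul env (rightmost t)) -> col_of l (seval A mul env t).
Proof.
  induction t as [n | a | t1 _ t2 IH2]; simpl; auto.
  intros Hl y. rewrite assoc. apply IH2, Hl.
Qed.

Lemma block_of_row_col i l w : T w -> row_of i w -> col_of l w -> P i l w.
Proof.
  intros Tw Hi Hl. destruct (P_cover w Tw) as [i' [l' Pw]].
  pose proof (P_rect _ _ _ _ _ _ Pw Pw) as Pww.
  destruct (Hi w) as [m Pm]. destruct (Hl w) as [j Pj].
  destruct (P_unique _ _ _ _ _ Pm Pww) as [-> _].
  destruct (P_unique _ _ _ _ _ Pj Pww) as [_ ->]. exact Pw.
Qed.

(* the row of t is that of its leftmost letter, which is either x or a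
   constant-valued leaf, so the hypothesis at x = u transfers it to x = v *)
Lemma row_of_term t u v c d i :
  ev u c t = ev u d t -> row_of i (ev v c t) -> row_of i (ev v d t).
Proof.
  intros H Hi. destruct (row_exists (ev v c (leftmost t))) as [r Hr].
  assert (r = i) as <- by exact (row_unique _ _ _ (row_of_leftmost _ _ _ Hr) Hi).
  destruct (leftmost_cases t) as [E | Hind].
  - apply row_of_leftmost. rewrite E in *. exact Hr.
  - destruct (row_exists (ev v d (leftmost t))) as [r' Hr'].
    assert (r' = r) as <-.
    { rewrite (Hind v u) in Hr, Hr'. apply row_of_leftmost in Hr, Hr'.
      rewrite H in Hr. exact (row_unique _ _ _ Hr' Hr). }
    exact (row_of_leftmost _ _ _ Hr').
Qed.

Lemma col_of_term t u v c d l :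
  ev u c t = ev u d t -> col_of l (ev v c t) -> col_of l (ev v d t).
Proof.
  intros H Hl. destruct (col_exists (ev v c (rightmost t))) as [r Hr].
  assert (r = l) as <- by exact (col_unique _ _ _ (col_of_rightmost _ _ _ Hr) Hl).
  destruct (rightmost_cases t) as [E | Hind].
  - apply col_of_rightmost. rewrite E in *. exact Hr.
  - destruct (col_exists (ev v d (rightmost t))) as [r' Hr'].
    assert (r' = r) as <-.
    { rewrite (Hind v u) in Hr, Hr'. apply col_of_rightmost in Hr, Hr'.
      rewrite H in Hr. exact (col_unique _ _ _ Hr' Hr). }
    exact (col_of_rightmost _ _ _ Hr').
Qed.

Lemma abelian_of_block_structure : abelian_algebra mul.
Proof.
  intros t u v c d H.
  destruct t as [[|n] | a | t1 t2]; [reflexivity | exact H | reflexivity |].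
  set (t := TMul t1 t2) in *.
  assert (Tt : forall w c, T (ev w c t)) by (intros; apply T_product).
  destruct (row_exists (ev v c t)) as [i Hi]. destruct (col_exists (ev v c t)) as [l Hl].
  pose proof (block_of_row_col i l _ (Tt v c) Hi Hl) as Pp.
  pose proof (block_of_row_col i l _ (Tt v d)
                (row_of_term t u v c d i H Hi) (col_of_term t u v c d l H Hl)) as Pq.
  destruct (P_group i l) as [e [Pe [Hunit _]]].
  pose proof (sandwich_term_interchange i l e t u v c d Pe (proj1 (Hunit e Pe))) as K.
  rewrite H in K. apply (block_cancel_left i l) in K; try apply sandwich_in_block; try exact Pe.
  destruct (Hunit _ Pp) as [Hp1 Hp2]. destruct (Hunit _ Pq) as [Hq1 Hq2].
  rewrite Hp1, Hp2, Hq1, Hq2 in K. symmetry. exact K.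
Qed.

End InflationOfRectangularBand.

Lemma abelian_of_inflation_of_rect_band (T : A -> Prop) :
  subsemigroup mul T -> inflation_of mul T -> rect_band_comm_groups mul T ->
  (forall e f, idempotent mul e -> idempotent mul f -> idempotent mul (e ** f)) ->
  abelian_algebra mul.
Proof.
  intros HT [X [_ [HXcover [HXrefl HXmul]]]]
    [I [L [P [HPT [HPcover [_ [_ [HPrect HPgroup]]]]]]]] Hidem.
  apply (abelian_of_block_structure T HT X) with (I := I) (L := L) (P := P); auto.
  - intro x. destruct (HXcover x) as [b [Hb [Xb _]]]. eauto.
  - intros x Hx. destruct (HPcover x Hx) as [i [l [Pil _]]]. eauto.
  - intros i l i' l' x H1 H2. destruct (HPcover x (HPT _ _ _ H1)) as [i0 [l0 [_ U]]].
    destruct (U _ _ H1) as [-> ->]. destruct (U _ _ H2) as [-> ->]. auto.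
  - intros i l. exact (proj1 (HPgroup i l)).
  - intros i l. exact (proj2 (HPgroup i l)).
Qed.

End Semigroup.

Theorem mainTheorem15 (A : Type) (mul : A -> A -> A)
  (assoc : forall x y z : A, mul x (mul y z) = mul (mul x y) z)
  (Hstar : cond_star mul) :
  abelian_algebra mul <->
  ((exists B : A -> Prop,
      subsemigroup mul B /\ inflation_of mul B /\ rect_band_comm_groups mul B) /\
   (forall e f : A, idempotent mul e -> idempotent mul f ->
      idempotent mul (mul e f))).
Proof.
  split.
  - intro Habel.
    assert (Hlocal : products_have_local_units A mul /\ local_monoids_are_groups A mul).
    { destruct Hstar as [Hideal | [l Hl]]; split.
      - exact (local_units_of_principal_ideals A mul assoc Habel Hideal).
      - exact (local_groups_of_principal_ideals A mul assoc Hideal).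
      - exact (local_units_of_finite_products A mul assoc Habel l Hl).
      - exact (local_groups_of_finite_products A mul assoc Habel l Hl). }
    destruct Hlocal as [Hunits Hgrp]. split.
    + exists (is_product A mul). repeat split.
      * intros x y _ _. apply is_product_mul.
      * exact (inflation_of_products A mul assoc Habel Hunits).
      * exact (rect_band_of_products A mul assoc Habel Hunits Hgrp).
    + exact (idempotent_mul_of_middle_units A mul assoc
               (abelian_middle_units A mul assoc Habel)).
  - intros [[B [HB [Hinfl Hrect]]] Hidem].
    exact (abelian_of_inflation_of_rect_band A mul assoc B HB Hinfl Hrect Hidem).
Qed.
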